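(* Given $t,\Delta\in\mathbb{N}$ and a set $B\subseteq[t]$ (given as a sorted list), one can compute in time $O(|B|)$ a set $A$ such that $A$ sparsely $(t,\Delta)$-approximates $B$.
   Context: $\mathbb{N}=\{0,1,2,\dots\}$, $[t]=\{0,1,\dots,t\}$. For $A\subseteq[t]$ and $b\in\mathbb{N}$ define $\mathrm{apx}^-_t(b,A)=\max\{a\in A\cup\{t+1\}: a\le b\}$ and $\mathrm{apx}^+_t(b,A)=\min\{a\in A\cup\{t+1\}: a\ge b\}$, with $\max\emptyset=-\infty$, $\min\emptyset=\infty$. $A$ $(t,\Delta)$-approximates $B$ if $A\subseteq B\subseteq[t]$ and for every $b\in B$, $\mathrm{apx}^+_t(b,A)-\mathrm{apx}^-_t(b,A)\le\Delta$. A set $A\subseteq\mathbb{N}$ is $\Delta$-sparse if $|A\cap[x,x+\Delta]|\le 2$ for every $x\in\mathbb{N}$; $A$ sparsely $(t,\Delta)$-approximates $B$ if $A$ is $\Delta$-sparse and $(t,\Delta)$-approximates $B$. *)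

From mathcomp Require Import all_boot.
Set Implicit Arguments. Unset Strict Implicit. Unset Printing Implicit Defensive.

(* Sets of naturals are represented by finite sequences, read as sets via \in. *)

(* apx^-_t(b,A) = max {a in A ∪ {t+1} | a <= b}; None stands for -oo (empty max). *)
Definition apx_minus (t b : nat) (A : seq nat) : option nat :=
  let S := [seq a <- t.+1 :: A | a <= b] in
  if S is [::] then None else Some (\max_(a <- S) a).

(* apx^+_t(b,A) = min {a in A ∪ {t+1} | a >= b}; None stands for +oo (empty min). *)
Definition apx_plus (t b : nat) (A : seq nat) : option nat :=
  let S := [seq a <- t.+1 :: A | b <= a] in
  if S is a0 :: _ then Some (foldr minn a0 S) else None.

(* apx^+ - apx^- <= Delta, with the conventions +oo - x = x - (-oo) = +oo. *)
Definition apx_gap_le (t Delta b : nat) (A : seq nat) : bool :=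
  match apx_plus t b A, apx_minus t b A with
  | Some hi, Some lo => hi - lo <= Delta
  | _, _ => false
  end.

Definition approximates (t Delta : nat) (A B : seq nat) : Prop :=
  {subset A <= B} /\ (forall b, b \in B -> b <= t) /\
  (forall b, b \in B -> apx_gap_le t Delta b A).

Definition sparse (Delta : nat) (A : seq nat) : Prop :=
  forall x : nat, count (fun a => a \in A) (iota x Delta.+1) <= 2.

Definition sparsely_approximates (t Delta : nat) (A B : seq nat) : Prop :=
  sparse Delta A /\ approximates t Delta A B.

(* Register machine: registers indexed by nat, values nat (word-RAM style).
   Commands: loop-free (assignment, output, sequencing, comparison branch),
   each executed command node costs one step. *)
Inductive expr : Type :=
| EVar of nat
| EConst of nat
| EAdd of expr & expr
| ESub of expr & expr.

Inductive cmd : Type :=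
| CSkip
| CAssign of nat & expr
| CEmit of expr
| CSeq of cmd & cmd
| CIfLe of expr & expr & cmd & cmd.

Fixpoint eval (r : nat -> nat) (e : expr) : nat :=
  match e with
  | EVar i => r i
  | EConst n => n
  | EAdd e1 e2 => eval r e1 + eval r e2
  | ESub e1 e2 => eval r e1 - eval r e2
  end.

Definition upd (r : nat -> nat) (i v : nat) : nat -> nat :=
  fun j => if j == i then v else r j.

Record mstate := MState { regs : nat -> nat; out : seq nat; steps : nat }.

Fixpoint exec (c : cmd) (s : mstate) : mstate :=
  match c with
  | CSkip => MState (regs s) (out s) (steps s).+1
  | CAssign i e => MState (upd (regs s) i (eval (regs s) e)) (out s) (steps s).+1
  | CEmit e => MState (regs s) (rcons (out s) (eval (regs s) e)) (steps s).+1
  | CSeq c1 c2 => exec c2 (exec c1 (MState (regs s) (out s) (steps s).+1))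
  | CIfLe e1 e2 c1 c2 =>
      let s' := MState (regs s) (out s) (steps s).+1 in
      if eval (regs s) e1 <= eval (regs s) e2 then exec c1 s' else exec c2 s'
  end.

(* A streaming program: an initialisation, a loop body executed once per input
   element (read sequentially from the sorted input list), and a finalisation. *)
Record sprog := SProg { p_init : cmd; p_body : cmd; p_fin : cmd }.

(* Input convention: register 0 holds t, register 1 holds Delta, all others 0;
   before each run of the body, the current element of B is placed in register 2
   (costing one step). *)
Definition run (P : sprog) (t Delta : nat) (B : seq nat) : mstate :=
  let r0 := upd (upd (fun _ => 0) 0 t) 1 Delta in
  let s0 := exec (p_init P) (MState r0 [::] 0) in
  let s1 := foldl (fun s b => exec (p_body P) (MState (upd (regs s) 2 b) (out s) (steps s).+1)) s0 B in
  exec (p_fin P) s1.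

From mathcomp Require Import all_boot zify.

(* Scan B increasingly, keeping its first and last element, and drop an
   element p exactly when its successor is still within Delta of the last
   kept element L.  A dropped element then lies between two kept elements at
   distance at most Delta, which bounds the apx gap; and when p is kept, the
   next kept element exceeds L + Delta, so kept elements two apart differ by
   more than Delta and a window [x, x + Delta] contains at most two of them.
   The scan is a one-pass register program doing constant work per element. *)

Lemma count_mem_swap (T : eqType) (s1 s2 : seq T) : uniq s1 -> uniq s2 ->
  count (fun x => x \in s1) s2 = count (fun x => x \in s2) s1.
Proof.
move=> u1 u2; rewrite -!size_filter; apply/perm_size/uniq_perm; rewrite ?filter_uniq //.
by move=> x; rewrite !mem_filter andbC.
Qed.

Fixpoint spread2 (D : nat) (A : seq nat) : bool :=
  if A is a0 :: ((_ :: a2 :: _) as A') then (a0 + D < a2) && spread2 D A' else true.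

Lemma spread2_behead D a A : spread2 D (a :: A) -> spread2 D A.
Proof. by case: A => [|? [|? ?]] //= /andP[]. Qed.

Lemma spread2_window D A x : sorted ltn A -> spread2 D A ->
  count (fun a => x <= a <= x + D) A <= 2.
Proof.
elim: A => [|a0 A IH] // sA spA.
have [a0x|xa0] := ltnP a0 x.
  rewrite /= (leqNgt x) a0x /=.
  by apply: IH; [exact: path_sorted sA | exact: spread2_behead spA].
case: A spA sA {IH} => [|a1 [|a2 r]]; try by move=> *; apply: leq_trans (count_size _ _) _.
case/andP=> far _ /and3P[_ _ sa2r].
have /allP lt_a2 := order_path_min ltn_trans sa2r.
have no_far : count (fun a => x <= a <= x + D) (a2 :: r) = 0.
  apply/eqP; rewrite -leqn0 leqNgt -has_count; apply/hasPn => a.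
  rewrite inE => /predU1P[->|/lt_a2 ?]; lia.
move: no_far => /= ->; rewrite addn0.
exact: leq_add (leq_b1 _) (leq_b1 _).
Qed.

Lemma spread2_sparse D A : sorted ltn A -> spread2 D A -> sparse D A.
Proof.
move=> sA spA x; rewrite count_mem_swap ?iota_uniq ?(sorted_uniq ltn_trans ltnn) //.
rewrite (eq_count (a2 := fun a => x <= a <= x + D)); first exact: spread2_window.
by move=> a; rewrite mem_iota addnS ltnS.
Qed.

Definition brackets (D : nat) (A : seq nat) (b : nat) : Prop :=
  exists a1 a2, [/\ a1 \in A, a2 \in A, a1 <= b <= a2 & a2 <= a1 + D].

Lemma brackets_subset D A A' b : {subset A <= A'} -> brackets D A b -> brackets D A' b.
Proof. by move=> sub [a1 [a2 [/sub a1A' /sub a2A' ? ?]]]; exists a1, a2. Qed.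

Lemma brackets_self D A b : b \in A -> brackets D A b.
Proof. by move=> bA; exists b, b; rewrite leqnn leq_addr. Qed.

Lemma leq_foldr_minn b d (S : seq nat) :
  (b <= foldr minn d S) = (b <= d) && all (leq b) S.
Proof. by elim: S => [|a S IH] /=; rewrite ?andbT // leq_min IH andbCA. Qed.

Lemma foldr_minn_leq d (S : seq nat) a : a \in S -> foldr minn d S <= a.
Proof.
elim: S => [|a' S IH] //=; rewrite inE => /predU1P[->|/IH]; first exact: geq_minl.
exact: leq_trans (geq_minr _ _).
Qed.

Lemma apx_minus_between t b A a : a \in A -> a <= b ->
  exists2 lo, apx_minus t b A = Some lo & a <= lo <= b.
Proof.
move=> aA ab; rewrite /apx_minus.
have aS : a \in [seq x <- t.+1 :: A | x <= b] by rewrite mem_filter ab inE aA orbT.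
case: [seq x <- _ | _] aS (@filter_all _ (leq^~ b) (t.+1 :: A)) => [|a0 S] // aS Sb.
exists (\max_(x <- a0 :: S) x) => //; apply/andP; split.
  exact: (@leq_bigmax_seq _ _ xpredT id).
by apply/bigmax_leqP_seq => x xS _; apply: (allP Sb).
Qed.

Lemma apx_plus_between t b A a : a \in A -> b <= a ->
  exists2 hi, apx_plus t b A = Some hi & b <= hi <= a.
Proof.
move=> aA ba; rewrite /apx_plus.
have aS : a \in [seq x <- t.+1 :: A | b <= x] by rewrite mem_filter ba inE aA orbT.
case: [seq x <- _ | _] aS (@filter_all _ (leq b) (t.+1 :: A)) => [|a0 S] // aS Sb.
exists (foldr minn a0 (a0 :: S)) => //; rewrite foldr_minn_leq // andbT.
by rewrite leq_foldr_minn Sb andbT; move: Sb => /andP[].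
Qed.

Lemma brackets_apx_gap_le t D A b : brackets D A b -> apx_gap_le t D b A.
Proof.
case=> a1 [a2 [a1A a2A /andP[a1b ba2] a21]]; rewrite /apx_gap_le.
have [lo -> /andP[a1lo _]] := apx_minus_between t _ _ _ a1A a1b.
have [hi -> /andP[_ hia2]] := apx_plus_between t _ _ _ a2A ba2.
lia.
Qed.

(* [L] is the last kept element and [p] the pending one. *)
Fixpoint sparsify_from (D L p : nat) (s : seq nat) : seq nat :=
  match s with
  | [::] => [:: p]
  | c :: s' => if c <= L + D then sparsify_from D L c s' else p :: sparsify_from D p c s'
  end.

Definition sparsify (D : nat) (B : seq nat) : seq nat :=
  match B with
  | [::] => [::]
  | [:: b] => [:: b]
  | b :: c :: s => b :: sparsify_from D b c s
  end.

Lemma sparsify_from_subseq D L p s : subseq (sparsify_from D L p s) (p :: s).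
Proof.
elim: s L p => [|c s IH] L p; first by rewrite /= eqxx.
rewrite [sparsify_from _ _ _ _]/=; case: ifP => _; last by rewrite /= eqxx; exact: IH.
exact: subseq_trans (IH L c) (subseq_cons _ _).
Qed.

Lemma sparsify_from_head D L p s : sorted ltn (p :: s) ->
  exists h r, sparsify_from D L p s = h :: r /\ p <= h <= maxn p (L + D).
Proof.
elim: s L p => [|c s IH] L p /=; first by exists p, [::]; rewrite leqnn leq_maxl.
case/andP=> pc scs; case: ifP => cLD.
  have [h [r [-> /andP[ch hmax]]]] := IH L c scs.
  by exists h, r; split => //; lia.
by exists p, (sparsify_from D p c s); rewrite leqnn leq_maxl.
Qed.

Lemma sparsify_from_spread2 D L p s : sorted ltn (L :: p :: s) ->
  spread2 D (L :: sparsify_from D L p s).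
Proof.
elim: s L p => [|c s IH] L p // /and3P[Lp pc scs].
rewrite [sparsify_from _ _ _ _]/=; case: ifP => cLD.
  by apply: IH; apply/andP; split; [exact: ltn_trans Lp pc | exact: scs].
have [h [r [E /andP[ch _]]]] := sparsify_from_head D p c s scs.
have := IH p c; rewrite E => spr.
rewrite /=; apply/andP; split; first lia.
by apply: spr; apply/andP; split.
Qed.

Lemma sparsify_from_brackets D L p s b : sorted ltn (L :: p :: s) -> b \in p :: s ->
  brackets D (L :: sparsify_from D L p s) b.
Proof.
elim: s L p => [|c s IH] L p /=.
  by move=> _; rewrite inE => /eqP->; apply: brackets_self; rewrite !inE eqxx orbT.
case/and3P=> Lp pc scs; rewrite inE; case: ifP => cLD /predU1P[->|bcs].
- have [h [r [E /andP[ch hmax]]]] := sparsify_from_head D L c s scs.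
  exists L, h; rewrite E !inE !eqxx orbT; split => //; lia.
- by apply: IH => //; rewrite /= scs andbT (ltn_trans Lp pc).
- by apply: brackets_self; rewrite !inE eqxx orbT.
- apply: brackets_subset (IH p c _ _) => //=; last by rewrite pc.
  by move=> a; rewrite !inE => /orP[->|->]; rewrite ?orbT.
Qed.

Lemma sparsify_subseq D B : subseq (sparsify D B) B.
Proof.
case: B => [|b [|c s]] //=; first by rewrite eqxx.
by rewrite eqxx; exact: sparsify_from_subseq.
Qed.

Lemma sparsify_spread2 D B : sorted ltn B -> spread2 D (sparsify D B).
Proof. by case: B => [|b [|c s]] //; exact: sparsify_from_spread2. Qed.

Lemma sparsify_brackets D B b : sorted ltn B -> b \in B -> brackets D (sparsify D B) b.
Proof.
case: B => [|b0 [|c s]] // sB; rewrite inE.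
  by move=> /eqP->; apply/brackets_self/mem_head.
case/predU1P=> [->|bcs]; first exact/brackets_self/mem_head.
exact: sparsify_from_brackets.
Qed.

Theorem sparsify_sparsely_approximates t D B : sorted ltn B -> all (fun b => b <= t) B ->
  sparsely_approximates t D (sparsify D B) B.
Proof.
move=> sB /allP Bt; split; last split => //.
- apply: spread2_sparse; last exact: sparsify_spread2.
  exact: (subseq_sorted ltn_trans (sparsify_subseq D B) sB).
- exact/mem_subseq/sparsify_subseq.
- by split=> // b bB; apply/brackets_apx_gap_le/sparsify_brackets.
Qed.

Fixpoint cmd_size (c : cmd) : nat :=
  match c with
  | CSeq c1 c2 => (cmd_size c1 + cmd_size c2).+1
  | CIfLe _ _ c1 c2 => (maxn (cmd_size c1) (cmd_size c2)).+1
  | _ => 1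
  end.

Lemma exec_steps_le c s : steps (exec c s) <= steps s + cmd_size c.
Proof.
elim: c s => [|i e|e|c1 IH1 c2 IH2|e1 e2 c1 IH1 c2 IH2] s /=; try lia.
- have := IH2 (exec c1 (MState (regs s) (out s) (steps s).+1)).
  have := IH1 (MState (regs s) (out s) (steps s).+1); rewrite /=; lia.
- case: ifP => _; [have := IH1 (MState (regs s) (out s) (steps s).+1)
                  | have := IH2 (MState (regs s) (out s) (steps s).+1)]; rewrite /=; lia.
Qed.

Definition feed (P : sprog) (s : mstate) (x : nat) : mstate :=
  exec (p_body P) (MState (upd (regs s) 2 x) (out s) (steps s).+1).

Lemma runE P t D B : run P t D B =
  exec (p_fin P) (foldl (feed P) (exec (p_init P) (MState (upd (upd (fun=> 0) 0 t) 1 D) [::] 0)) B).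
Proof. by []. Qed.

Lemma foldl_feed_steps_le P s B :
  steps (foldl (feed P) s B) <= steps s + (cmd_size (p_body P)).+1 * size B.
Proof.
elim: B s => [|x B IH] s /=; first lia.
have := exec_steps_le (p_body P) (MState (upd (regs s) 2 x) (out s) (steps s).+1).
have := IH (feed P s x); rewrite /feed /=; lia.
Qed.

Definition prog_cost (P : sprog) : nat :=
  cmd_size (p_init P) + (cmd_size (p_body P)).+1 + cmd_size (p_fin P).

Lemma run_steps_le P t D B : steps (run P t D B) <= prog_cost P * (size B).+1.
Proof.
rewrite runE /prog_cost; set s0 := exec (p_init P) _.
have := exec_steps_le (p_init P) (MState (upd (upd (fun=> 0) 0 t) 1 D) [::] 0).
have := foldl_feed_steps_le P s0 B.
have := exec_steps_le (p_fin P) (foldl (feed P) s0 B).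
rewrite -/s0 /=; nia.
Qed.

Local Notation rD := 1 (only parsing).
Local Notation rX := 2 (only parsing).
Local Notation rPhase := 3 (only parsing).
Local Notation rPend := 4 (only parsing).
Local Notation rLast := 5 (only parsing).

(* [rPhase] is min(number of elements read, 2); in phase 2, [rLast] and [rPend]
   hold the arguments [L] and [p] of [sparsify_from]. *)
Definition sparsify_body : cmd :=
  CIfLe (EVar rPhase) (EConst 0)
    (CSeq (CEmit (EVar rX)) (CSeq (CAssign rLast (EVar rX)) (CAssign rPhase (EConst 1))))
    (CSeq (CIfLe (EConst 2) (EVar rPhase)
            (CIfLe (EVar rX) (EAdd (EVar rLast) (EVar rD))
               CSkip
               (CSeq (CEmit (EVar rPend)) (CAssign rLast (EVar rPend))))
            CSkip)
       (CSeq (CAssign rPend (EVar rX)) (CAssign rPhase (EConst 2)))).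

Definition sparsify_fin : cmd := CIfLe (EConst 2) (EVar rPhase) (CEmit (EVar rPend)) CSkip.

Definition sparsify_prog : sprog := SProg CSkip sparsify_body sparsify_fin.

Definition greedy_regs (D L p : nat) (s : mstate) : Prop :=
  [/\ regs s rD = D, regs s rPhase = 2, regs s rLast = L & regs s rPend = p].

Lemma feed_greedy D L p s x : greedy_regs D L p s ->
  greedy_regs D (if x <= L + D then L else p) x (feed sparsify_prog s x) /\
  out (feed sparsify_prog s x) = out s ++ (if x <= L + D then [::] else [:: p]).
Proof.
case=> sD sPhase sLast sPend; rewrite /feed /= /upd /= sPhase sLast sD sPend.
by case: ifP => _; rewrite ?cats0 ?cats1.
Qed.

Lemma run_from_greedy D L p s xs : greedy_regs D L p s ->
  out (exec sparsify_fin (foldl (feed sparsify_prog) s xs)) = out s ++ sparsify_from D L p xs.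
Proof.
elim: xs L p s => [|x xs IH] L p s sG /=.
  by case: sG => _ sPhase _ sPend; rewrite sPhase sPend cats1.
have [/IH -> ->] := feed_greedy _ _ _ _ x sG; rewrite -catA.
by case: ifP.
Qed.

Lemma out_run_sparsify t D B : out (run sparsify_prog t D B) = sparsify D B.
Proof.
rewrite runE; case: B => [|b [|c s]] //=.
by rewrite (@run_from_greedy D b c).
Qed.

Theorem lemma4p7 :
  exists (P : sprog) (c : nat),
    forall (t Delta : nat) (B : seq nat),
      sorted ltn B -> all (fun b => b <= t) B ->
      steps (run P t Delta B) <= c * (size B).+1 /\
      sparsely_approximates t Delta (out (run P t Delta B)) B.
Proof.
exists sparsify_prog, (prog_cost sparsify_prog) => t Delta B sB Bt.
split; first exact: run_steps_le.
by rewrite out_run_sparsify; apply: sparsify_sparsely_approximates.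
Qed.
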